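(* Let $\Gamma$ be a web and $G=SU(3)$. The set of homomorphisms $\rho:\pi_1(S^3-\Gamma)\to SU(3)$ such that every meridian is sent to a matrix of trace $-1$ is in one-to-one correspondence with the set of assignments of complex lines in $\mathbb{C}^3$ to the edges of $\Gamma$ such that the three lines at any vertex are mutually Hermitian orthogonal.
   Context: A web is an oriented graph $\Gamma$ embedded in $S^2\subset S^3$ each of whose vertices is trivalent and is a source or a sink. With basepoint above the plane, each edge $e_i$ has a meridian $x_i$ (a loop encircling $e_i$ once by the right hand rule), and $\pi_1(S^3-\Gamma)=\langle x_i\mid x_{a}x_{b}x_{c}=e\ \text{for each vertex with incident edges } e_a,e_b,e_c\rangle$. The correspondence sends $\rho$ to the assignment of the $+1$-eigenspace of $\rho(x_i)$ to $e_i$. *)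

From HB Require Import structures.
From mathcomp Require Import all_boot all_order all_algebra.
From mathcomp Require Import reals.
From mathcomp.real_closed Require Import complex.
Set Implicit Arguments. Unset Strict Implicit. Unset Printing Implicit Defensive.
Import GRing.Theory Num.Theory.
Local Open Scope ring_scope.

(* A web: finitely many edges and vertices; edges are oriented, with a tail and
   a head vertex, or no endpoints at all (closed loop components).  Each vertex
   is trivalent and is either a source (all three incident edges leave it) or
   a sink (all three enter it).  [wends v] lists the three incident edges of v
   in the order a, b, c used in the vertex relation  x_a x_b x_c = e  of the
   Wirtinger-type presentation of pi_1(S^3 - Gamma) (this order is the one
   determined by the planar embedding). *)
Record web := Web {
  wE : finType;
  wV : finType;
  wends : wV -> 'I_3 -> wE;
  wtail : wE -> option wV;
  whead : wE -> option wV;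
  wsource : wV -> bool;
  wends_inj : forall v, injective (wends v);
  wloop : forall e, (wtail e == None) = (whead e == None);
  wends_tail : forall v k, wsource v -> wtail (wends v k) = Some v;
  wends_head : forall v k, ~~ wsource v -> whead (wends v k) = Some v;
  wtail_ends : forall e v, wtail e = Some v ->
                 wsource v /\ exists k, wends v k = e;
  whead_ends : forall e v, whead e = Some v ->
                 ~~ wsource v /\ exists k, wends v k = e
}.

Section Defs.
Variable R : realType.
Local Notation C := R[i].

Definition adjmx n (A : 'M[C]_n) : 'M[C]_n := (map_mx (@Num.conj C) A)^T.

Definition in_SU3 (A : 'M[C]_3) : Prop :=
  A *m adjmx A = 1%:M /\ \det A = 1.

(* Homomorphisms pi_1(S^3 - Gamma) -> SU(3), via the presentation
   < x_e (e edge) | x_a x_b x_c = e at each vertex >: a homomorphism is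
   determined by the images rho e of the meridians x_e, subject to the
   vertex relations. *)
Definition trace_neg1_rep (W : web) (rho : {ffun wE W -> 'M[C]_3}) : Prop :=
  (forall e, in_SU3 (rho e)) /\
  (forall v, rho (wends v 0) *m rho (wends v 1) *m rho (wends v 2) = 1%:M) /\
  (forall e, \tr (rho e) = -1).

Definition eig1 (A : 'M[C]_3) : {vspace 'cV[C]_3} :=
  lker (linfun (fun v : 'cV[C]_3 => A *m v - v)).

Definition hdot (u v : 'cV[C]_3) : C := \sum_(i < 3) u i 0 * Num.conj (v i 0).

Definition is_line (U : {vspace 'cV[C]_3}) : Prop := \dim U = 1%N.

Definition herm_orth (U1 U2 : {vspace 'cV[C]_3}) : Prop :=
  forall u v, u \in U1 -> v \in U2 -> hdot u v = 0.

Definition orth_line_assignment (W : web) (L : {ffun wE W -> {vspace 'cV[C]_3}})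
  : Prop :=
  (forall e, is_line (L e)) /\
  (forall v (j k : 'I_3), j != k -> herm_orth (L (wends v j)) (L (wends v k))).

End Defs.

(* A matrix A in SU(3) with trace -1 has adjugate A^* of trace -1, so by Cayley-Hamilton
   (A - 1)(A + 1)^2 = 0; hence A^2 - 1 is a nilpotent normal matrix, i.e. 0.  Thus A is a
   Hermitian involution of trace -1: A = 2P - 1 for the orthogonal projection P onto the
   line Fix(A) (a half-turn about that line), and A is determined by Fix(A).  For the
   half-turns R_a, R_b, R_c about lines through a, b, c, the relation R_a R_b R_c = 1 means
   R_a R_b = R_c, and taking traces, 4 tr(P_a P_b) - 1 = -1; as tr(P_a P_b) is a positive
   multiple of |<a,b>|^2, a is orthogonal to b (and cyclically).  Conversely, orthogonal
   lines give P_a + P_b + P_c = 1, whence R_a R_b R_c = 1. *)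

From HB Require Import structures.
From mathcomp Require Import all_boot all_order all_algebra.
From mathcomp Require Import reals.
From mathcomp.real_closed Require Import complex.
From mathcomp Require Import ring.
Set Implicit Arguments. Unset Strict Implicit. Unset Printing Implicit Defensive.
Import GRing.Theory Num.Theory.
Local Open Scope ring_scope.
Local Open Scope sesquilinear_scope.

Lemma idem_involution (R : pzRingType) (p : R) :
  p * p = p -> (p *+ 2 - 1) * (p *+ 2 - 1) = 1.
Proof.
move=> pp; rewrite mulrBr mulr1 mulrBl mul1r mulrnAl mulrnAr pp.
by rewrite mulr2n addrK opprB addrC subrK.
Qed.

Lemma orth_idem_involutions (R : pzRingType) (a b c : R) :
  a * b = 0 -> c * c = c -> a + b + c = 1 ->
  (a *+ 2 - 1) * (b *+ 2 - 1) * (c *+ 2 - 1) = 1.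
Proof.
move=> ab0 cc abc; suff -> : (a *+ 2 - 1) * (b *+ 2 - 1) = c *+ 2 - 1.
  exact: idem_involution.
have -> : c = 1 - (a + b) by rewrite -abc addrC addKr.
rewrite mulrBr mulr1 mulrBl mul1r mulrnAl mulrnAr ab0 !mul0rn sub0r opprB.
rewrite [in RHS]mulrnBl [in RHS]addrAC -[1 *+ 2]/(1 + 1) addrK mulrnDl opprD addrCA.
by congr (_ + _); rewrite opprD addrC !mulr2n !opprD.
Qed.

Lemma orth_idem_sum (R : pzRingType) k (e : 'I_k -> R) :
  (forall i, e i * e i = e i) -> (forall i j, i != j -> e i * e j = 0) ->
  (\sum_i e i) * (\sum_i e i) = \sum_i e i.
Proof.
move=> idem orth; rewrite mulr_suml; apply: eq_bigr => i _.
by rewrite mulr_sumr (bigD1 i) //= idem big1 ?addr0 // => j ji; rewrite orth // eq_sym.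
Qed.

Lemma big_ord3 (V : nmodType) (F : 'I_3 -> V) : \sum_i F i = F 0 + F 1 + F 2.
Proof.
by rewrite !big_ord_recl big_ord0 addr0 addrA; congr (F _ + F _ + F _); apply: val_inj.
Qed.

Lemma ord3_sym_cases (P : 'I_3 -> 'I_3 -> Prop) :
  (forall i j, P i j -> P j i) -> P 0 1 -> P 1 2 -> P 2 0 ->
  forall i j, i != j -> P i j.
Proof.
move=> Psym P01 P12 P20.
have ord3 (k : 'I_3) : [\/ k = 0, k = 1 | k = 2].
  by case: k => [[|[|[|?]]] k3];
    [constructor 1 | constructor 2 | constructor 3 | by []]; apply: val_inj.
by move=> i j; case: (ord3 i) (ord3 j) => -> [] ->; rewrite ?eqxx // => _; auto.
Qed.

Lemma char_poly3 (R : comNzRingType) (A : 'M[R]_3) :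
  char_poly A = 'X^3 - (\tr A)%:P * 'X^2 + (\tr (\adj A))%:P * 'X - (\det A)%:P.
Proof.
(* [ring] compares entries syntactically: index them all by numerals. *)
have entE i j : A i j = locked A (inord i) (inord j) by rewrite -lock !inord_val.
rewrite /char_poly /char_poly_mx /mxtrace.
rewrite (expand_det_row _ ord0) [\det A](expand_det_row _ ord0) !big_ord_recl !big_ord0.
rewrite !mxE /cofactor !(expand_det_row _ ord0) !big_ord_recl !big_ord0.
rewrite /cofactor !det_mx11 !mxE !entE /= /bump /= ?mulr1n ?mulr0n.
ring.
Qed.

Lemma det_1Dmul (R : comNzRingType) n (u : 'cV[R]_n) (v : 'rV[R]_n) :
  \det (1%:M + u *m v) = 1 + (v *m u) 0 0.
Proof.
pose M := block_mx 1%:M (- u) v 1%:M.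
have M_lu : M = block_mx 1%:M 0 v 1%:M *m block_mx 1%:M (- u) 0 (1%:M + v *m u).
  rewrite mulmx_block ?mul1mx ?mul0mx ?mulmx0 ?mulmx1 ?addr0 ?add0r mulmxN.
  by rewrite [X in block_mx _ _ _ X]addrC addrK.
have M_ul : M = block_mx (1%:M + u *m v) (- u) 0 1%:M *m block_mx 1%:M 0 v 1%:M.
  by rewrite mulmx_block ?mul1mx ?mul0mx ?mulmx0 ?mulmx1 ?addr0 ?add0r mulNmx addrK.
have := congr1 determinant M_ul; rewrite {1}M_lu !det_mulmx (det_lblock 1%:M v).
rewrite !det_ublock !det1 !mul1r !mulr1 => <-.
by rewrite det_mx11 !mxE eqxx.
Qed.

Lemma eq_linfun (K : fieldType) (aT rT : vectType K) (f g : aT -> rT) :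
  f =1 g -> linfun f = linfun g.
Proof. by move=> fg; rewrite unlock; congr Hom; apply: eq_mx => i j /=; rewrite fg. Qed.

Section ConjugateTranspose.
Variable C : numClosedFieldType.

Lemma trmxC_mul m n p (A : 'M[C]_(m, n)) (B : 'M[C]_(n, p)) :
  (A *m B)^t* = B^t* *m A^t*.
Proof. by rewrite trmx_mul map_mxM. Qed.

Lemma trmxC1 n : (1%:M : 'M[C]_n)^t* = 1%:M.
Proof. by rewrite trmx1 map_mx1. Qed.

Lemma trmxCB m n (A B : 'M[C]_(m, n)) : (A - B)^t* = A^t* - B^t*.
Proof. by rewrite linearB map_mxB. Qed.

Lemma trmxC_eq0 m n (A : 'M[C]_(m, n)) : (A^t* == 0) = (A == 0).
Proof. by rewrite map_mx_eq0 trmx_eq0. Qed.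

Lemma mxtrace_mul_trmxC_eq0 m n (M : 'M[C]_(m, n)) :
  (\tr (M *m M^t*) == 0) = (M == 0).
Proof.
apply/idP/eqP => [|->]; last by rewrite mul0mx mxtrace0.
have -> : \tr (M *m M^t*) = \sum_i \sum_j M i j * (M i j)^*.
  by apply: eq_bigr => i _; rewrite mxE; apply: eq_bigr => j _; rewrite !mxE.
move=> /eqP sum0; apply/matrixP => i j; rewrite mxE; apply/eqP.
rewrite -mul_conjC_eq0; apply/eqP.
have row0 : \sum_j M i j * (M i j)^* = 0.
  by apply: (psumr_eq0P _ sum0) => // k _; apply: sumr_ge0 => l _; apply: mul_conjC_ge0.
by apply: (psumr_eq0P _ row0) => // k _; apply: mul_conjC_ge0.
Qed.

Lemma herm_idem_trace0 n (Q : 'M[C]_n) :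
  Q^t* = Q -> Q *m Q = Q -> \tr Q = 0 -> Q = 0.
Proof. by move=> hQ QQ trQ; apply/eqP; rewrite -mxtrace_mul_trmxC_eq0 hQ QQ trQ. Qed.

Lemma normalmx_sqr_eq0 n (B : 'M[C]_n) : B \is normalmx -> B *m B = 0 -> B = 0.
Proof.
move=> /normalmxP BBt BB0.
have BtB0 : B^t* *m B = 0.
  apply/eqP; rewrite -mxtrace_mul_trmxC_eq0 trmxC_mul trmxCK !mulmxA -(mulmxA _ B) BBt.
  by rewrite !mulmxA -(mulmxA _ B B) BB0 mulmx0 mxtrace0.
by apply/eqP; rewrite -trmxC_eq0 -mxtrace_mul_trmxC_eq0 trmxCK BtB0 mxtrace0.
Qed.

Definition cdot n (u v : 'cV[C]_n) : C := (v^t* *m u) 0 0.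

Lemma trmxC_mul_cdot n (u v : 'cV[C]_n) : v^t* *m u = (cdot u v)%:M.
Proof. exact: mx11_scalar. Qed.

Lemma cdotC n (u v : 'cV[C]_n) : cdot v u = (cdot u v)^*.
Proof.
rewrite /cdot !mxE rmorph_sum; apply: eq_bigr => i _.
by rewrite !mxE rmorphM /= conjCK mulrC.
Qed.

Lemma cdot_eq0 n (u : 'cV[C]_n) : (cdot u u == 0) = (u == 0).
Proof. by rewrite /cdot -trace_mx11 -trmxC_eq0 -mxtrace_mul_trmxC_eq0 trmxCK. Qed.

Definition lineproj n (u : 'cV[C]_n) : 'M[C]_n := (cdot u u)^-1 *: (u *m u^t*).

Definition halfturn n (u : 'cV[C]_n) : 'M[C]_n := lineproj u *+ 2 - 1%:M.

Lemma lineprojMcv n (u v : 'cV[C]_n) :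
  lineproj u *m v = ((cdot u u)^-1 * cdot v u) *: u.
Proof. by rewrite -scalemxAl -mulmxA trmxC_mul_cdot mul_mx_scalar scalerA. Qed.

Lemma lineproj_herm n (u : 'cV[C]_n) : (lineproj u)^t* = lineproj u.
Proof.
by rewrite /lineproj linearZ /= map_mxZ trmxC_mul trmxCK fmorphV /= -cdotC.
Qed.

Lemma mxtrace_lineprojM n (u v : 'cV[C]_n) :
  \tr (lineproj u *m lineproj v) =
  (cdot u u)^-1 * (cdot v v)^-1 * (cdot u v * (cdot u v)^*).
Proof.
rewrite {2}/lineproj -scalemxAr mulmxA lineprojMcv -scalemxAl !mxtraceZ.
by rewrite mxtrace_mulC trace_mx11 -/(cdot u v) [cdot v u]cdotC; ring.
Qed.

Lemma lineprojM_orth n (u v : 'cV[C]_n) :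
  cdot v u = 0 -> lineproj u *m lineproj v = 0.
Proof.
move=> vu0; rewrite {2}/lineproj -scalemxAr mulmxA lineprojMcv vu0 mulr0.
by rewrite scale0r mul0mx scaler0.
Qed.

Lemma halfturn_herm n (u : 'cV[C]_n) : (halfturn u)^t* = halfturn u.
Proof. by rewrite trmxCB trmxC1 mulr2n linearD map_mxD lineproj_herm. Qed.

Section NonzeroVector.
Variables (n : nat) (u : 'cV[C]_n).
Hypothesis u_neq0 : u != 0.

Lemma lineproj_id : lineproj u *m u = u.
Proof. by rewrite lineprojMcv mulVf ?scale1r ?cdot_eq0. Qed.

Lemma lineproj_idem : lineproj u *m lineproj u = lineproj u.
Proof. by rewrite {2}/lineproj -scalemxAr mulmxA lineproj_id. Qed.

Lemma mxtrace_lineproj : \tr (lineproj u) = 1.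
Proof.
by rewrite /lineproj mxtraceZ mxtrace_mulC trace_mx11 -/(cdot u u) mulVf ?cdot_eq0.
Qed.

Lemma lineproj_fixE v : (lineproj u *m v == v) = (v \in <[u]>%VS).
Proof.
apply/eqP/vlineP => [<- | [c ->]]; first by rewrite lineprojMcv; eexists.
by rewrite -scalemxAr lineproj_id.
Qed.

Lemma halfturnK : halfturn u *m halfturn u = 1%:M.
Proof. by rewrite mulmxE idem_involution // -mulmxE lineproj_idem. Qed.

Lemma mxtrace_halfturn : \tr (halfturn u) = 2%:R - n%:R.
Proof. by rewrite /halfturn raddfB raddfMn /= mxtrace_lineproj mxtrace1. Qed.

Lemma det_halfturn : \det (halfturn u) = (-1) ^+ n.+1.
Proof.
have -> : halfturn u = - (1%:M + (- 2%:R / cdot u u) *: u *m u^t*).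
  by rewrite opprD -scalemxAl -scalerA scaleNr opprK scaler_nat addrC.
rewrite -scaleN1r detZ det_1Dmul -scalemxAr mxE -/(cdot u u) divfK ?cdot_eq0 //.
by rewrite exprSr; ring.
Qed.

Lemma halfturn_fixE v : (halfturn u *m v == v) = (v \in <[u]>%VS).
Proof.
rewrite -lineproj_fixE /halfturn mulmxBl mul1mx mulr2n mulmxDl subr_eq -!mulr2n.
by rewrite -!scaler_nat (inj_eq (scalerI _)) // pnatr_eq0.
Qed.

End NonzeroVector.

Lemma mxtrace_halfturnM n (u v : 'cV[C]_n) : u != 0 -> v != 0 ->
  \tr (halfturn u *m halfturn v) = \tr (lineproj u *m lineproj v) *+ 4 + n%:R - 4%:R.
Proof.
move=> u0 v0; rewrite /halfturn mulmxE idmxE mulrBl mulrBr !mulr1 mul1r mulrnAl mulrnAr.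
rewrite !raddfB !raddfMn /= -mulmxE (mxtrace_lineproj u0) (mxtrace_lineproj v0).
by rewrite -idmxE mxtrace1; ring.
Qed.

Lemma lineproj_sum_orth n (u : 'I_n -> 'cV[C]_n) :
  (forall i, u i != 0) -> (forall i j, i != j -> cdot (u i) (u j) = 0) ->
  \sum_i lineproj (u i) = 1%:M.
Proof.
move=> u_neq0 u_orth; set S := \sum_i _.
have SS : S * S = S.
  apply: orth_idem_sum => [i | i j ij]; rewrite -mulmxE.
    exact: lineproj_idem.
  by rewrite lineprojM_orth // u_orth // eq_sym.
suff : 1%:M - S = 0 by move/eqP; rewrite subr_eq0 => /eqP.
apply: herm_idem_trace0.
- rewrite trmxCB trmxC1 linear_sum raddf_sum; congr (_ - _).
  by apply: eq_bigr => i _; apply: lineproj_herm.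
- by rewrite mulmxE idmxE mulrBl mul1r mulrBr mulr1 SS subrr subr0.
- rewrite raddfB /= mxtrace1 /S (big_morph _ (@mxtraceD _ _) (mxtrace0 _ _)).
  rewrite (eq_bigr (fun=> 1)) => [|i _]; last exact: mxtrace_lineproj.
  by rewrite sumr_const card_ord subrr.
Qed.

Lemma halfturn_prod_eq1_orth (a b c : 'cV[C]_3) : a != 0 -> b != 0 -> c != 0 ->
  halfturn a *m halfturn b *m halfturn c = 1%:M -> cdot a b = 0.
Proof.
move=> a0 b0 c0 abc.
have ab_c : halfturn a *m halfturn b = halfturn c.
  by rewrite -[LHS]mulmx1 -(halfturnK c0) mulmxA abc mul1mx.
have trab : \tr (lineproj a *m lineproj b) *+ 4 = 0.
  move: (congr1 mxtrace ab_c); rewrite mxtrace_halfturnM // mxtrace_halfturn //.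
  by move/eqP; rewrite -subr_eq0 => /eqP <-; ring.
move/eqP: trab; rewrite mulrn_eq0 /= mxtrace_lineprojM !mulf_eq0 !invr_eq0 !cdot_eq0.
by rewrite (negbTE a0) (negbTE b0) conjC_eq0 /= orbb => /eqP.
Qed.

Lemma halfturn_prod3P (u : 'I_3 -> 'cV[C]_3) : (forall i, u i != 0) ->
  halfturn (u 0) *m halfturn (u 1) *m halfturn (u 2) = 1%:M <->
  (forall i j, i != j -> cdot (u i) (u j) = 0).
Proof.
move=> u_neq0; split=> [prod1 | u_orth].
  have rot (a b c : 'cV[C]_3) : halfturn a *m halfturn b *m halfturn c = 1%:M ->
      halfturn b *m halfturn c *m halfturn a = 1%:M.
    by rewrite -mulmxA => /mulmx1C.
  apply: ord3_sym_cases => [i j ij0 | | |].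
  - by rewrite cdotC ij0 conjC0.
  - exact: halfturn_prod_eq1_orth prod1.
  - exact: halfturn_prod_eq1_orth (rot _ _ _ prod1).
  - exact: halfturn_prod_eq1_orth (rot _ _ _ (rot _ _ _ prod1)).
rewrite !mulmxE idmxE; apply: orth_idem_involutions.
- by rewrite -mulmxE lineprojM_orth ?u_orth.
- by rewrite -mulmxE lineproj_idem.
- by rewrite -(big_ord3 (fun i => lineproj (u i))) lineproj_sum_orth.
Qed.

Lemma herm_idem_fix_lineproj n (P : 'M[C]_n) (u : 'cV[C]_n) :
  P^t* = P -> P *m P = P -> \tr P = 1 -> u != 0 -> P *m u = u -> P = lineproj u.
Proof.
move=> hP PP trP u0 Pu; apply/eqP; rewrite -subr_eq0; apply/eqP.
have PL : P *m lineproj u = lineproj u by rewrite /lineproj -scalemxAr mulmxA Pu.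
have LP : lineproj u *m P = lineproj u.
  by rewrite /lineproj -scalemxAl -mulmxA -{1}hP -trmxC_mul Pu.
apply: herm_idem_trace0.
- by rewrite trmxCB hP lineproj_herm.
- by rewrite mulmxBl !mulmxBr PP PL LP lineproj_idem // subrr subr0.
- by rewrite raddfB /= trP mxtrace_lineproj // subrr.
Qed.

Lemma herm_involution_halfturn n (A : 'M[C]_n) (u : 'cV[C]_n) :
  A^t* = A -> A *m A = 1%:M -> \tr A = 2%:R - n%:R -> u != 0 -> A *m u = u ->
  A = halfturn u.
Proof.
move=> hA AA trA u0 Au; pose P := (2%:R^-1 : C) *: (A + 1%:M).
have two_neq0 : (2%:R : C) != 0 by rewrite pnatr_eq0.
have AE : A = P *+ 2 - 1%:M by rewrite -scaler_nat scalerA divff // scale1r addrK.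
rewrite AE /halfturn; congr (_ *+ 2 - _); apply: herm_idem_fix_lineproj => //; rewrite /P.
- by rewrite linearZ map_mxZ /= linearD map_mxD /= hA trmxC1 fmorphV rmorph_nat.
- rewrite -scalemxAl -scalemxAr scalerA mulmxDl mulmxDr AA mul1mx mulmx1.
  by rewrite (addrC 1%:M A) -mulr2n -scaler_nat scalerA -mulrA mulVf // mulr1.
- by rewrite mxtraceZ mxtraceD trA mxtrace1 subrK mulVf.
- by rewrite -scalemxAl mulmxDl Au mul1mx -mulr2n -scaler_nat scalerA mulVf // scale1r.
Qed.

Lemma mulmx_fixed_col (F : fieldType) n (A M : 'M[F]_n) :
  A *m M = M -> M != 0 -> exists2 u : 'cV[F]_n, u != 0 & A *m u = u.
Proof.
move=> AM /matrix0Pn[i [j Mij]]; exists (col j M); last by rewrite !colE mulmxA AM.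
by apply/cV0Pn; exists i; rewrite mxE.
Qed.

Lemma unitary3_det1_trN1_sqr (A : 'M[C]_3) :
  A *m A^t* = 1%:M -> \det A = 1 -> \tr A = -1 -> A *m A = 1%:M.
Proof.
move=> AAt detA trA; have AtA := mulmx1C AAt.
have adjA : \adj A = A^t*.
  by rewrite -[\adj A]mulmx1 -AAt mulmxA mul_adj_mx detA mul1mx.
have trAt : \tr (A^t*) = -1 by rewrite trace_map_mx mxtrace_tr trA rmorphN1.
have cubic : horner_mx A ('X^3 + 'X^2 - 'X - 1) = 0.
  rewrite -(Cayley_Hamilton A) char_poly3 adjA trAt trA detA; congr horner_mx.
  by rewrite polyCN polyC1; ring.
pose B := A * A - 1.
have BB0 : B * B = 0.
  have -> : B = horner_mx A ('X^2 - 1) by rewrite rmorphB rmorphXn /= horner_mx_X rmorph1.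
  rewrite -rmorphM (_ : _ * _ = ('X^3 + 'X^2 - 'X - 1) * ('X - 1)); last by ring.
  by rewrite rmorphM /= cubic mul0r.
have cA : GRing.comm A (A^t*) by rewrite /GRing.comm -!mulmxE AAt AtA.
have cAA : GRing.comm (A * A) (A^t* * A^t*).
  by apply: commrM; apply: commr_sym; apply: commrM; apply: commr_sym.
have normalB : B \is normalmx.
  apply/normalmxP; rewrite trmxCB trmxC1 trmxC_mul !mulmxE.
  by apply: commrB (commr1 _); apply: commr_sym; apply: commrB (commr1 _); apply: commr_sym.
by apply/eqP; rewrite -subr_eq0 -/B (normalmx_sqr_eq0 normalB BB0).
Qed.

End ConjugateTranspose.

Section SU3.
Variable R : realType.
Local Notation C := R[i].

Lemma adjmxE n (A : 'M[C]_n) : adjmx A = A^t*.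
Proof. exact: map_trmx. Qed.

Lemma hdotE (u v : 'cV[C]_3) : hdot u v = cdot u v.
Proof. by rewrite /cdot mxE; apply: eq_bigr => i _; rewrite !mxE mulrC. Qed.

(* [eig1] applies [linfun] to a function with no canonical linear structure. *)
Lemma memv_eig1 (A : 'M[C]_3) v : (v \in eig1 A) = (A *m v == v).
Proof.
rewrite /eig1 (@eq_linfun _ _ _ _ (mulmx (A - 1%:M))) => [|w]; last first.
  by rewrite mulmxBl mul1mx.
by rewrite memv_ker lfunE /= mulmxBl mul1mx subr_eq0.
Qed.

Lemma eig1_halfturn (u : 'cV[C]_3) : u != 0 -> eig1 (halfturn u) = <[u]>%VS.
Proof. by move=> u0; apply/vspaceP => v; rewrite memv_eig1 halfturn_fixE. Qed.

Lemma halfturn_SU3 (u : 'cV[C]_3) : u != 0 -> in_SU3 (halfturn u).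
Proof.
by move=> u0; split; rewrite ?adjmxE ?halfturn_herm ?halfturnK // det_halfturn // -signr_odd.
Qed.

Lemma SU3_trN1_halfturn (A : 'M[C]_3) : in_SU3 A -> \tr A = -1 ->
  vpick (eig1 A) != 0 /\ A = halfturn (vpick (eig1 A)).
Proof.
rewrite /in_SU3 adjmxE => -[AAt detA] trA.
have AA := unitary3_det1_trN1_sqr AAt detA trA.
have hA : A^t* = A by rewrite -[A^t*]mul1mx -AA -mulmxA AAt mulmx1.
have fixA : A *m vpick (eig1 A) = vpick (eig1 A).
  by apply/eqP; rewrite -memv_eig1 memv_pick.
suff eig1A_neq0 : vpick (eig1 A) != 0.
  by split=> //; apply: herm_involution_halfturn => //; rewrite trA; ring.
have [u u0 Au] : exists2 u : 'cV[C]_3, u != 0 & A *m u = u.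
  apply: (@mulmx_fixed_col _ _ A (A + 1%:M)); first by rewrite mulmxDr AA mulmx1 addrC.
  apply/negP; rewrite addr_eq0 => /eqP A_N1; move/eqP: trA.
  by rewrite A_N1 raddfN /= mxtrace1 eqr_opp pnatr_eq1.
rewrite vpick0; apply: contraNneq u0 => eig0.
by rewrite -memv0 -eig0 memv_eig1 Au.
Qed.

Lemma SU3_trN1_eig1_inj (A B : 'M[C]_3) : in_SU3 A -> \tr A = -1 ->
  in_SU3 B -> \tr B = -1 -> eig1 A = eig1 B -> A = B.
Proof.
move=> SA trA SB trB AB; rewrite [LHS](SU3_trN1_halfturn SA trA).2.
by rewrite [RHS](SU3_trN1_halfturn SB trB).2 AB.
Qed.

Lemma herm_orth_vline (u v : 'cV[C]_3) : herm_orth <[u]>%VS <[v]>%VS <-> hdot u v = 0.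
Proof.
split=> [uv | uv _ _ /vlineP[a ->] /vlineP[b ->]].
  exact: uv (memv_line u) (memv_line v).
rewrite /hdot (eq_bigr (fun i => a * b^* * (u i 0 * (v i 0)^*))) => [|i _].
  by rewrite -mulr_sumr -/(hdot u v) uv mulr0.
by rewrite !mxE rmorphM /=; ring.
Qed.

Lemma is_line_vpick (U : {vspace 'cV[C]_3}) :
  is_line U -> vpick U != 0 /\ <[vpick U]>%VS = U.
Proof.
rewrite /is_line => dimU.
have U_neq0 : vpick U != 0 by rewrite vpick0; apply/eqP => U0; rewrite U0 dimv0 in dimU.
by split=> //; apply/eqP; rewrite eqEdim -memvE memv_pick dimU dim_vline U_neq0.
Qed.

End SU3.

Section Webs.
Variables (R : realType) (W : web).

Lemma eig1_halfturn_ffun (u : wE W -> 'cV[R[i]]_3) :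
  (forall e, u e != 0) ->
  [ffun e => eig1 ([ffun e => halfturn (u e)] e)] = [ffun e => <[u e]>%VS].
Proof. by move=> u_neq0; apply/ffunP => e; rewrite !ffunE (eig1_halfturn (u_neq0 e)). Qed.

Lemma halfturn_repP (u : wE W -> 'cV[R[i]]_3) :
  (forall e, u e != 0) ->
  trace_neg1_rep [ffun e => halfturn (u e)] <->
  (forall v (j k : 'I_3), j != k -> hdot (u (wends v j)) (u (wends v k)) = 0).
Proof.
move=> u_neq0; split=> [[_ [vertex _]] v | u_orth].
  move=> j k jk; rewrite hdotE; move: j k jk.
  apply/(halfturn_prod3P (fun j => u_neq0 (wends v j))).
  by move: (vertex v); rewrite !ffunE.
split=> [e | ]; first by rewrite ffunE; apply: halfturn_SU3.
split=> [v | e]; rewrite !ffunE; last by rewrite mxtrace_halfturn //; ring.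
apply/(halfturn_prod3P (fun j => u_neq0 (wends v j))) => j k jk.
by rewrite -hdotE u_orth.
Qed.

Lemma trace_neg1_rep_halfturn (rho : {ffun wE W -> 'M[R[i]]_3}) : trace_neg1_rep rho ->
  exists2 u : wE W -> 'cV[R[i]]_3, (forall e, u e != 0) & rho = [ffun e => halfturn (u e)].
Proof.
move=> [rhoSU [_ rho_tr]]; exists (fun e => vpick (eig1 (rho e))) => [e|].
  exact: (SU3_trN1_halfturn (rhoSU e) (rho_tr e)).1.
by apply/ffunP => e; rewrite ffunE -(SU3_trN1_halfturn (rhoSU e) (rho_tr e)).2.
Qed.

Lemma trace_neg1_rep_eig1_inj (rho rho' : {ffun wE W -> 'M[R[i]]_3}) :
  trace_neg1_rep rho -> trace_neg1_rep rho' ->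
  [ffun e => eig1 (rho e)] = [ffun e => eig1 (rho' e)] -> rho = rho'.
Proof.
move=> [rhoSU [_ rho_tr]] [rho'SU [_ rho'_tr]] /ffunP eig1_eq; apply/ffunP => e.
apply: SU3_trN1_eig1_inj (rhoSU e) (rho_tr e) (rho'SU e) (rho'_tr e) _.
by have := eig1_eq e; rewrite [in X in X = _]ffunE [in X in _ = X]ffunE.
Qed.

End Webs.

Theorem mainTheorem5 (R : realType) (W : web) :
  (forall rho : {ffun wE W -> 'M[R[i]]_3}, trace_neg1_rep rho ->
     orth_line_assignment [ffun e => eig1 (rho e)]) /\
  (forall L : {ffun wE W -> {vspace 'cV[R[i]]_3}}, orth_line_assignment L ->
     exists! rho : {ffun wE W -> 'M[R[i]]_3},
       trace_neg1_rep rho /\ [ffun e => eig1 (rho e)] = L).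
Proof.
split=> [rho rho_rep | L [L_line L_orth]].
  have [u u_neq0 rhoE] := trace_neg1_rep_halfturn rho_rep.
  rewrite rhoE in rho_rep; move/(halfturn_repP u_neq0): rho_rep => u_orth.
  rewrite rhoE eig1_halfturn_ffun //.
  split=> [e | v j k jk]; rewrite !ffunE; first by rewrite /is_line dim_vline u_neq0.
  by apply/herm_orth_vline; apply: u_orth.
have [u u_neq0 uL] : exists2 u : wE W -> 'cV[R[i]]_3,
    (forall e, u e != 0) & forall e, <[u e]>%VS = L e.
  by exists (fun e => vpick (L e)) => e; have [] := is_line_vpick (L_line e).
have rep : trace_neg1_rep [ffun e => halfturn (u e)].
  apply/(halfturn_repP u_neq0) => v j k jk.
  by apply/herm_orth_vline; rewrite !uL; apply: L_orth.
have eig1_rep : [ffun e => eig1 ([ffun e => halfturn (u e)] e)] = L.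
  by rewrite eig1_halfturn_ffun //; apply/ffunP => e; rewrite ffunE uL.
exists [ffun e => halfturn (u e)]; split=> // rho [rho_rep rhoL].
exact: trace_neg1_rep_eig1_inj rep rho_rep (etrans eig1_rep (esym rhoL)).
Qed.
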